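(* Let $(k,|\cdot|)$ be an algebraically closed complete metrized field, $\mathbb{D}=\{t\in k:|t|<1\}$, $d\ge2$, and let $P_t(z)=\alpha_0(t)z^d+\cdots+\alpha_d(t)$ with $\alpha_i\in\mathcal{O}(\mathbb{D})[t^{-1}]$ and $\alpha_0(t)\ne0$ for $t\ne0$. Let $C>0$ be a constant such that $$\left|\frac1d\log\max\{1,|P_t(z)|\}-\log\max\{1,|z|\}\right|\le C\log|t|^{-1}\quad\text{for all }0<|t|\le\tfrac12,\ z\in k.$$ Let $a\in\mathcal{O}(\mathbb{D})[t^{-1}]$ be such that $u_m(t):=P_t^m(a(t))$ is analytic on $\mathbb{D}$ for all $m\ge0$, and set $g_m(t):=d^{-m}\log\max\{1,|u_m(t)|\}$. Let $l\ge Cd$ be an integer and let $Q_1,\dots,Q_N\in k[t]$ be polynomials such that for every $n\ge0$ there is $i_n\in\{1,\dots,N\}$ with $(u_n(t)-Q_{i_n}(t))/t^l$ analytic on $\mathbb{D}$. Put $A:=\max_{1\le j\le N}\left\{\sup_{|t|<1}|Q_j(t)|+2\right\}$. Let $n_0\ge1$ be an integer and $0<r_0\le\frac12$ with $\sup_{|t|<r_0}|u_{n_0}(t)|\le\log A$, and set $r_j:=r_0^{2^j}$ for $j\ge0$. Then for all $j\ge0$, $$\sup_{|t|<r_j}g_{n_0+j}(t)\le\frac{C_1}{d^{n_0}},\qquad\text{where }C_1=\frac{d}{d-1}\log(3A).$$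
   Context: $\mathcal{O}(\mathbb{D})$ is the ring of analytic functions on $\mathbb{D}$; $\mathcal{O}(\mathbb{D})[t^{-1}]$ consists of meromorphic functions on $\mathbb{D}$ with poles only at $0$. *)

From HB Require Import structures.
From mathcomp Require Import all_boot all_order all_algebra.
From mathcomp Require Import all_classical all_reals.
From mathcomp Require Import exp.
Set Implicit Arguments. Unset Strict Implicit. Unset Printing Implicit Defensive.
Import Order.TTheory GRing.Theory Num.Theory.
Local Open Scope ring_scope.

Section Defs.
Variables (R : realType) (k : fieldType) (abs : k -> R).

Definition is_absval : Prop :=
  [/\ forall x, 0 <= abs x,
      forall x, abs x = 0 <-> x = 0,
      forall x y, abs (x * y) = abs x * abs y
    & forall x y, abs (x + y) <= abs x + abs y].

Definition kconverges (s : nat -> k) (x : k) : Prop :=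
  forall eps : R, 0 < eps -> exists N : nat, forall n, (N <= n)%N -> abs (s n - x) < eps.

Definition kcauchy (s : nat -> k) : Prop :=
  forall eps : R, 0 < eps -> exists N : nat,
    forall n m, (N <= n)%N -> (N <= m)%N -> abs (s n - s m) < eps.

Definition kcomplete : Prop :=
  forall s, kcauchy s -> exists x, kconverges s x.

Definition inD (t : k) : Prop := abs t < 1.

Definition analytic_on_D (f : k -> k) : Prop :=
  exists c : nat -> k, forall t, inD t ->
    kconverges (fun n => \sum_(i < n) c i * t ^+ i) (f t).

(* f is in O(D)[t^{-1}]: meromorphic on D with poles only at 0,
   i.e. f(t) = h(t) / t^m on D \ {0} with h analytic on D
   (the value of f at 0 is irrelevant). *)
Definition merom_at0_on_D (f : k -> k) : Prop :=
  exists (m : nat) (h : k -> k), analytic_on_D h /\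
    forall t, inD t -> t != 0 -> f t = h t / t ^+ m.

End Defs.

From HB Require Import structures.
From mathcomp Require Import all_boot all_order all_algebra.
From mathcomp Require Import all_classical all_reals.
From mathcomp Require Import cyclic separable cyclotomic.
From mathcomp Require Import normedtype sequences exp.
From mathcomp Require Import lra zify ring.
Set Implicit Arguments. Unset Strict Implicit. Unset Printing Implicit Defensive.
Import Order.TTheory GRing.Theory Num.Theory.
Local Open Scope ring_scope.

(* Two facts carry the argument. The first is the maximum modulus principle on
   the disk |t| <= |s| for a (possibly archimedean) absolute value on an
   algebraically closed field. For a polynomial p, the discrete Cauchy formula
   N p_i s^i = sum_m p(w^m s) w^(-m i) over an N-th root of unity w bounds p on
   the disk by N^2/|N| times its sup on the circle; applied to p^(m e) with
   N = q^e this becomes (|p(t)|/B)^m <= q^2/|q| for every m, so |p(t)| <= B.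
   Analytic functions are uniform limits of their truncations on smaller disks,
   and their value at 0 is reached by continuity.
   The second is the escape step: if log+|u_n| <= B on |t| < r, the growth
   hypothesis gives |u_(n+1)| <= e^(dB) |s|^(-Cd) on a circle |t| = |s| < r, so
   h = (u_(n+1) - Q_i)/t^l is at most (e^(dB)|s|^(-Cd) + A)/|s|^l there, hence
   inside; for |t| <= |s|^2 the factor t^l wins because l >= Cd, and
   |u_(n+1)(t)| <= 3A e^(dB). Taking |s| just above sqrt|t| yields
   log+|u_(n+1)| <= log 3A + dB on |t| < r^2, and iterating from r_0 gives
   log+|u_(n_0+j)| <= log 3A (d^(j+1) - 1)/(d - 1). *)

Section RealFacts.
Variable R : realType.

Lemma exists_expr_lt [lam eps : R] : 0 <= lam < 1 -> 0 < eps -> exists n, lam ^+ n < eps.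
Proof.
move=> /andP[lam0 lam1] eps0.
have lamn1 : `|lam| < 1 by rewrite ger0_norm.
have [N _ HN] := cvgr_lt _ (cvg_expr lamn1) _ eps0.
by exists N; apply: HN => /=.
Qed.

Lemma le_of_forall_expr_le (x B g : R) : 0 <= x -> 0 <= B ->
  (forall m, x ^+ m <= g * B ^+ m) -> x <= B.
Proof.
move=> x0 B0 HxB; rewrite leNgt; apply/negP => Bx.
have x_gt0 : 0 < x := le_lt_trans B0 Bx.
have g_gt0 : 0 < g by have := HxB 0%N; rewrite !expr0 mulr1; lra.
have [m Hm] : exists m, (B / x) ^+ m < g^-1.
  apply: exists_expr_lt; last by rewrite invr_gt0.
  by rewrite divr_ge0 ?(ltW x_gt0) //= ltr_pdivrMr // mul1r.
have : g * B ^+ m < x ^+ m.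
  by move: Hm; rewrite expr_div_n ltr_pdivrMr ?exprn_gt0 // -(ltr_pM2l g_gt0) mulrA mulfV ?gt_eqF // mul1r.
have := HxB m; lra.
Qed.

Lemma exists_expr_between (a b eta : R) : 0 <= a -> b <= 1 -> 0 <= eta < 1 ->
  a < eta * b -> exists m, a < eta ^+ m < b.
Proof.
move=> a0 b1 eta01 ab.
have b0 : 0 < b by case/andP: eta01 => eta0 _; nra.
have [m Hm Hmin] := ex_minnP (exists_expr_lt eta01 b0).
case: m Hm Hmin => [|m] Hm Hmin; first by move: Hm; rewrite expr0; lra.
have bm : b <= eta ^+ m by rewrite leNgt; apply/negP => /Hmin; rewrite ltnn.
exists m.+1; rewrite Hm andbT exprS.
case/andP: eta01 => eta0 _; nra.
Qed.

Lemma ln_max1_le (x M : R) : 1 <= M -> x <= M -> ln (Num.max 1 x) <= ln M.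
Proof.
move=> M1 xM; rewrite ler_ln ?posrE ?ge_max ?M1 ?xM //; last by lra.
by rewrite lt_max ltr01.
Qed.

Lemma le_expR_of_ln_max1 (x B : R) : ln (Num.max 1 x) <= B -> x <= expR B.
Proof.
have max1_pos : 0 < Num.max 1 x by rewrite lt_max ltr01.
move=> h; apply: le_trans (_ : Num.max 1 x <= _); first by rewrite le_max lexx orbT.
by rewrite -(lnK max1_pos) ler_expR.
Qed.

Lemma geometric_sum_div_le (dR L : R) n0 j : 1 < dR -> 0 <= L ->
  (dR ^+ (n0 + j))^-1 * (L * (dR ^+ j.+1 - 1) / (dR - 1)) <= dR / (dR - 1) * L / dR ^+ n0.
Proof.
move=> d1 L0; have dn0 : 0 < dR ^+ n0 by rewrite exprn_gt0 //; lra.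
have dj0 : 0 < dR ^+ j by rewrite exprn_gt0 //; lra.
have -> : (dR ^+ (n0 + j))^-1 * (L * (dR ^+ j.+1 - 1) / (dR - 1)) =
    dR / (dR - 1) * L / dR ^+ n0 - L / ((dR - 1) * dR ^+ n0 * dR ^+ j).
  by rewrite exprD exprS; field; rewrite !gt_eqF ?subr_gt0.
rewrite gerDl oppr_le0 divr_ge0 // !mulr_ge0 ?subr_ge0 ?ltW //.
Qed.

End RealFacts.

Section AbsoluteValue.
Variables (R : realType) (k : fieldType) (abs : k -> R).
Hypothesis Habs : is_absval abs.

Lemma abs_ge0 x : 0 <= abs x. Proof. by case: Habs. Qed.
Lemma abs_eq0 x : abs x = 0 <-> x = 0. Proof. by case: Habs. Qed.
Lemma absM x y : abs (x * y) = abs x * abs y. Proof. by case: Habs. Qed.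
Lemma absD x y : abs (x + y) <= abs x + abs y. Proof. by case: Habs. Qed.
Lemma abs0 : abs 0 = 0. Proof. exact/abs_eq0. Qed.

Lemma abs_gt0 [x] : x != 0 -> 0 < abs x.
Proof. by move=> /eqP xn0; rewrite lt_def abs_ge0 andbT; apply/eqP => /abs_eq0. Qed.

Lemma abs1 : abs 1 = 1.
Proof.
have a1 : abs 1 != 0 by rewrite gt_eqF ?abs_gt0 ?oner_neq0.
by apply: (mulIf a1); rewrite mul1r -absM mulr1.
Qed.

Lemma absX x n : abs (x ^+ n) = abs x ^+ n.
Proof. by elim: n => [|n IH]; rewrite ?abs1 // !exprS absM IH. Qed.

Lemma absN x : abs (- x) = abs x.
Proof.
have absN1 : abs (-1) = 1.
  by apply/eqP; rewrite -(pexpr_eq1 (n := 2)) // ?abs_ge0 // -absX sqrrN expr1n abs1.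
by rewrite -mulN1r absM absN1 mul1r.
Qed.

Lemma absV x : abs x^-1 = (abs x)^-1.
Proof.
have [->|xn0] := eqVneq x 0; first by rewrite invr0 abs0 invr0.
by apply: (mulIf (lt0r_neq0 (abs_gt0 xn0))); rewrite -absM mulVf // abs1 mulVf ?lt0r_neq0 ?abs_gt0.
Qed.

Lemma absB x y : abs (x - y) <= abs x + abs y.
Proof. by rewrite -(absN y) absD. Qed.

Lemma absC x y : abs (x - y) = abs (y - x).
Proof. by rewrite -opprB absN. Qed.

Lemma abs_le_addB x y : abs x <= abs y + abs (x - y).
Proof. by rewrite -{1}(subrKC y x) absD. Qed.

Lemma abs_sum (I : Type) (r : seq I) (P : pred I) (F : I -> k) :
  abs (\sum_(i <- r | P i) F i) <= \sum_(i <- r | P i) abs (F i).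
Proof.
elim/big_rec2: _ => [|i y1 y2 _ h]; first by rewrite abs0.
by apply: le_trans (absD _ _) _; rewrite lerD2l.
Qed.

Definition nontrivial_absval := exists x0, 0 < abs x0 < 1.

Lemma abs_le1_of_trivial : ~ nontrivial_absval -> forall x, abs x <= 1.
Proof.
move=> triv x; rewrite leNgt; apply/negP => x1; apply: triv.
exists x^-1; rewrite absV invr_gt0 invf_lt1 ?x1 ?andbT //; lra.
Qed.

End AbsoluteValue.

Section PowerSeries.
Variables (R : realType) (k : fieldType) (abs : k -> R).
Hypothesis Habs : is_absval abs.

Definition psum (c : nat -> k) (n : nat) (t : k) := \sum_(i < n) c i * t ^+ i.

Lemma psumS c n t : psum c n.+1 t = psum c n t + c n * t ^+ n.
Proof. by rewrite /psum big_ord_recr. Qed.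

Lemma psum_term_bounded c x y : kconverges abs (psum c ^~ x) y ->
  exists K, 0 <= K /\ forall i, abs (c i * x ^+ i) <= K.
Proof.
move=> /(_ 1 ltr01) [N0 HN0].
exists (Num.max 2 (\big[Num.max/0]_(i < N0) abs (c i * x ^+ i))).
split=> [|i]; first by rewrite le_max ler0n.
rewrite le_max; case: (ltnP i N0) => [iN0|N0i].
  by rewrite (le_bigmax 0 (fun j : 'I_N0 => abs (c j * x ^+ j)) (Ordinal iN0)) orbT.
have -> : c i * x ^+ i = (psum c i.+1 x - y) + (y - psum c i x).
  by rewrite psumS addrA subrK addrC addKr.
apply/orP; left; apply: le_trans (absD Habs _ _) _.
have := HN0 _ (leqW N0i); have := HN0 _ N0i; rewrite (absC Habs); lra.
Qed.

Lemma psum_geometric_tail c x y K rho : 0 <= rho < 1 ->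
  (forall i, abs (c i * x ^+ i) <= K * rho ^+ i) ->
  kconverges abs (psum c ^~ x) y ->
  forall n, abs (y - psum c n x) <= K * rho ^+ n / (1 - rho).
Proof.
move=> /andP[rho0 rho1] Hterm Hy n.
have rho1' : 0 < 1 - rho by lra.
have K0 : 0 <= K.
  by apply: le_trans (abs_ge0 Habs (c 0%N * x ^+ 0)) _; rewrite -[K]mulr1 -(expr0 rho); exact: Hterm.
have chunk m : abs (psum c (n + m) x - psum c n x) <= K * (rho ^+ n - rho ^+ (n + m)) / (1 - rho).
  elim: m => [|m IH]; first by rewrite addn0 !subrr (abs0 Habs) mulr0 mul0r.
  rewrite addnS psumS addrAC; apply: le_trans (absD Habs _ _) _.
  have -> : K * (rho ^+ n - rho ^+ (n + m).+1) / (1 - rho) =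
      K * (rho ^+ n - rho ^+ (n + m)) / (1 - rho) + K * rho ^+ (n + m).
    by rewrite exprS; field; rewrite lt0r_neq0.
  exact: lerD.
apply/ler_addgt0Pr => e e0.
have [N1 HN1] := Hy e e0.
have h1 := HN1 (n + N1)%N (leq_addl _ _); rewrite (absC Habs) in h1.
have h2 := chunk N1; rewrite mulrBr mulrBl in h2.
have h3 : 0 <= K * rho ^+ (n + N1) / (1 - rho).
  by apply/divr_ge0/ltW => //; exact/mulr_ge0/exprn_ge0.
have -> : y - psum c n x = (y - psum c (n + N1) x) + (psum c (n + N1) x - psum c n x).
  by rewrite addrA subrK.
apply: le_trans (absD Habs _ _) _; lra.
Qed.

Lemma analytic_tail_le (f : k -> k) c :
  (forall t, inD abs t -> kconverges abs (psum c ^~ t) (f t)) ->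
  forall s, inD abs s -> exists K, 0 <= K /\ forall x rho n, 0 <= rho < 1 ->
    abs x <= rho * abs s -> abs (f x - psum c n x) <= K * rho ^+ n / (1 - rho).
Proof.
move=> Hc s Ds; have [K [K0 HK]] := psum_term_bounded (Hc s Ds).
exists K; split=> // x rho n rho01 xs; case/andP: (rho01) => rho0 rho1.
have Dx : inD abs x by have := abs_ge0 Habs s; rewrite /inD in Ds *; nra.
apply: psum_geometric_tail (Hc x Dx) _ => // i.
apply: le_trans (_ : abs (c i * s ^+ i) * rho ^+ i <= _); last first.
  by apply: ler_wpM2r (HK i); apply: exprn_ge0.
rewrite !(absM Habs) !(absX Habs) -mulrA -exprMn; apply: ler_wpM2l; first exact: abs_ge0.
apply: lerXn2r; rewrite ?nnegrE ?(abs_ge0 Habs) ?(mulrC (abs s)) //.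
by rewrite mulr_ge0 ?(abs_ge0 Habs).
Qed.

End PowerSeries.

Section RootsOfUnity.
Variable k : closedFieldType.

Lemma nth_root_exists (x : k) n : (0 < n)%N -> exists y : k, y ^+ n = x.
Proof.
move=> n0; have /closed_rootP [y] : size ('X^n - x%:P : {poly k}) != 1%N.
  by rewrite size_XnsubC // eqSS -lt0n.
by rewrite rootE !hornerE subr_eq0 => /eqP; exists y.
Qed.

Lemma prim_root_exists n : (0 < n)%N -> n%:R != 0 :> k ->
  exists z : k, n.-primitive_root z.
Proof.
move=> n_gt0 n_ne0; have [r Xn1E] := closed_field_poly_normal ('X^n - 1 : {poly k}).
rewrite (monicP (monicXnsubC 1 n_gt0)) scale1r in Xn1E.
have r_unity : all n.-unity_root r by apply/allP => z; rewrite -root_prod_XsubC -Xn1E.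
have r_uniq : uniq r by rewrite -separable_prod_XsubC -Xn1E separable_Xn_sub_1.
have r_size : (n < (size r).+1)%N by rewrite -(size_prod_XsubC r id) -Xn1E size_XnsubC.
by have /hasP[z _ zn] := has_prim_root n_gt0 r_unity r_uniq r_size; exists z.
Qed.

Lemma sum_prim_root_expr N (w : k) m : N.-primitive_root w ->
  \sum_(i < N) (w ^+ m) ^+ i = if (N %| m)%N then N%:R else 0.
Proof.
move=> wN; case: ifPn => [Nm|Nm].
  have -> : w ^+ m = 1 by apply/eqP; rewrite -(prim_order_dvd wN).
  by under eq_bigr do rewrite expr1n; rewrite sumr_const card_ord.
have wm1 : w ^+ m - 1 != 0 by rewrite subr_eq0 -(prim_order_dvd wN).
apply: (mulfI wm1); rewrite mulr0 -subrX1 -exprM mulnC exprM (prim_expr_order wN).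
by rewrite expr1n subrr.
Qed.

Lemma prim_root_coef_sum N (w s : k) (p : {poly k}) (i : 'I_N) :
  N.-primitive_root w -> (size p <= N)%N ->
  \sum_(m < N) p.[w ^+ m * s] * (w ^+ m) ^+ (N - i) = N%:R * (p`_i * s ^+ i).
Proof.
move=> wN pN.
have dvd_shift (j : 'I_N) : (N %| j + (N - i))%N = (j == i).
  rewrite -val_eqE /=; have := ltn_ord i; have := ltn_ord j.
  case: (ltngtP j i) => ji jN iN; first by apply/negbTE/negP => /dvdn_leq; lia.
    have -> : (j + (N - i) = N + (j - i))%N by lia.
    by rewrite dvdn_addr //; apply/negbTE/negP => /dvdn_leq; lia.
  by rewrite (_ : (j + (N - i) = N)%N) ?dvdnn //; lia.
have term (j : 'I_N) : \sum_(m < N) p`_j * (w ^+ m * s) ^+ j * (w ^+ m) ^+ (N - i)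
    = p`_j * s ^+ j * (if j == i then N%:R else 0).
  rewrite -dvd_shift -(sum_prim_root_expr _ wN) big_distrr; apply: eq_bigr => m _.
  by rewrite [X in _ = _ * X]exprAC exprD exprMn; ring.
under eq_bigr do rewrite (horner_coef_wide _ pN) big_distrl.
rewrite exchange_big /=; under eq_bigr do rewrite term.
rewrite (bigD1 i) //= eqxx big1 ?addr0 => [|j /negbTE ->]; last by rewrite mulr0.
by rewrite mulrC.
Qed.

End RootsOfUnity.

Lemma exists_expn_gt_mul (c q : nat) : (1 < q)%N -> exists e, (0 < e)%N /\ (c * e < q ^ e)%N.
Proof.
move=> q1; set f := (2 * c + 1)%N; exists (2 * f)%N; split; first lia.
have ff : (f * f < q ^ f * q ^ f)%N by apply: ltn_mul; apply: ltn_expl.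
by rewrite mul2n -addnn expnD; apply: leq_ltn_trans ff; rewrite /f; nia.
Qed.

Section AbsoluteValueClosedField.
Variables (R : realType) (k : closedFieldType) (abs : k -> R).
Hypothesis Habs : is_absval abs.

Lemma abs_prim_root N (w : k) : N.-primitive_root w -> abs w = 1.
Proof.
move=> wN; have N0 := prim_order_gt0 wN.
have : abs w ^+ N = 1 by rewrite -(absX Habs) (prim_expr_order wN) (abs1 Habs).
by move/eqP; rewrite pexpr_eq1 ?(abs_ge0 Habs) // => /eqP.
Qed.

Lemma exists_abs_between : nontrivial_absval abs -> forall a b : R, 0 <= a -> a < b -> b <= 1 ->
  exists s, a < abs s < b.
Proof.
move=> [x0 /andP[x0_gt0 x0_lt1]] a b a0 ab b1.
have b0 : 0 < b by lra.
set lam := a / b.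
have lam01 : 0 <= lam < 1.
  by apply/andP; split; [exact: divr_ge0 (ltW b0) | rewrite ltr_pdivrMr // mul1r].
have [N lamN] := exists_expr_lt lam01 x0_gt0.
have [y yN] := nth_root_exists x0 (ltn0Sn N).
set eta := abs y.
have etaN : eta ^+ N.+1 = abs x0 by rewrite -(absX Habs) yN.
have eta0 : 0 <= eta := abs_ge0 Habs y.
have lam_eta : lam < eta.
  rewrite ltNge; apply/negP => eta_lam.
  case/andP: lam01 => lam0 lam1.
  have : eta ^+ N.+1 <= lam ^+ N.+1 by apply: lerXn2r; rewrite ?nnegrE.
  have : lam ^+ N.+1 <= lam ^+ N.
    by rewrite exprS; apply: ler_piMl; [exact: exprn_ge0 | exact: ltW].
  lra.
have eta1 : eta < 1 by rewrite -(expr_lt1 (ltn0Sn N)) // etaN.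
have [m /andP[am mb]] : exists m, a < eta ^+ m < b.
  apply: exists_expr_between => //; first by rewrite eta0.
  by rewrite -(divfK (lt0r_neq0 b0) a) -/lam ltr_pM2r.
by exists (y ^+ m); rewrite (absX Habs) am mb.
Qed.

Lemma horner_le_prim_root_bound N (w s t : k) (p : {poly k}) (B : R) :
  N.-primitive_root w -> (size p <= N)%N -> s != 0 -> abs t <= abs s ->
  (forall x, abs x = abs s -> abs p.[x] <= B) ->
  abs p.[t] <= N%:R * N%:R / abs (N%:R : k) * B.
Proof.
move=> wN pN s0 ts HB.
have N0 : 0 < abs (N%:R : k) by apply: (abs_gt0 Habs); exact: prim_root_natf_neq0 wN.
have s_gt0 : 0 < abs s := abs_gt0 Habs s0.
have HBm (m : nat) : abs p.[w ^+ m * s] <= B.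
  by apply: HB; rewrite (absM Habs) (absX Habs) (abs_prim_root wN) expr1n mul1r.
have cauchy (i : 'I_N) : abs p`_i * abs s ^+ i <= N%:R / abs (N%:R : k) * B.
  rewrite mulrAC ler_pdivlMr // mulrC -(absX Habs) -!(absM Habs) -(prim_root_coef_sum _ _ wN pN).
  apply: le_trans (abs_sum Habs _ _ _) _.
  rewrite mulr_natl -[X in B *+ X](card_ord N) -sumr_const; apply: ler_sum => m _.
  by rewrite (absM Habs) !(absX Habs) (abs_prim_root wN) !expr1n mulr1.
rewrite (horner_coef_wide _ pN); apply: le_trans (abs_sum Habs _ _ _) _.
rewrite -!mulrA mulr_natl -[X in _ *+ X](card_ord N) -sumr_const mulrA; apply: ler_sum => i _.
rewrite (absM Habs) (absX Habs); apply: le_trans (cauchy i).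
by apply: ler_wpM2l; [exact: abs_ge0 | apply: lerXn2r; rewrite ?nnegrE ?(abs_ge0 Habs)].
Qed.

Lemma poly_max_modulus (p : {poly k}) (s t : k) (B : R) : s != 0 -> abs t <= abs s ->
  (forall x, abs x = abs s -> abs p.[x] <= B) -> abs p.[t] <= B.
Proof.
move=> s0 ts HB.
have B0 : 0 <= B := le_trans (abs_ge0 Habs _) (HB s erefl).
have [q [q_prime q0]] : exists q, prime q /\ q%:R != 0 :> k.
  have [two0|] := eqVneq (2%:R : k) 0; last by exists 2%N.
  by exists 3%N; rewrite (natrD _ 2 1) two0 add0r oner_neq0.
set g := q%:R * q%:R / abs (q%:R : k).
apply: (le_of_forall_expr_le (abs_ge0 Habs _) B0 (g := g)) => m.
have [e [e0 He]] := exists_expn_gt_mul ((size p).-1 * m) (prime_gt1 q_prime).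
have qe0 : (q ^ e)%:R != 0 :> k by rewrite natrX expf_neq0.
have [w wN] : exists w : k, (q ^ e).-primitive_root w.
  by apply: prim_root_exists qe0; rewrite expn_gt0 prime_gt0.
have pN : (size (p ^+ (m * e)) <= q ^ e)%N.
  by apply: leq_trans (size_poly_exp_leq _ _) _; rewrite mulnA.
have HBme x : abs x = abs s -> abs (p ^+ (m * e)).[x] <= B ^+ (m * e).
  by move=> /HB xs; rewrite horner_exp (absX Habs) lerXn2r // nnegrE (abs_ge0 Habs).
have := horner_le_prim_root_bound wN pN s0 ts HBme.
rewrite horner_exp (absX Habs) !natrX (absX Habs) -exprMn -exprVn -exprMn -/g.
rewrite !exprM -exprMn (ler_pXn2r e0) // nnegrE ?exprn_ge0 ?(abs_ge0 Habs) //.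
by rewrite mulr_ge0 ?exprn_ge0 // /g divr_ge0 ?mulr_ge0 ?(abs_ge0 Habs).
Qed.

Lemma analytic_max_modulus (f : k -> k) (s t : k) (B : R) : analytic_on_D abs f ->
  inD abs s -> s != 0 -> abs t <= abs s ->
  (forall x, abs x = abs s -> abs (f x) <= B) -> abs (f t) <= B.
Proof.
move=> [c Hc] Ds s0 ts HB.
have s_gt0 := abs_gt0 Habs s0.
have [s' /andP[ss' s'1]] : exists s', abs s < abs s' < 1.
  by apply: exists_abs_between; [exists s; rewrite s_gt0 | exact: abs_ge0 | |].
have [K [K0 HK]] := analytic_tail_le Habs Hc s'1.
set rho := abs s / abs s'.
have s'_gt0 : 0 < abs s' by apply: lt_trans ss'.
have rho01 : 0 <= rho < 1.
  by apply/andP; split; [exact: divr_ge0 (ltW s_gt0) (ltW s'_gt0) | rewrite ltr_pdivrMr ?mul1r].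
have rho1 : 0 < 1 - rho by case/andP: rho01 => _; rewrite subr_gt0.
apply/ler_addgt0Pr => e e0.
have [n Hn] : exists n, rho ^+ n < e / 2 * (1 - rho) / (K + 1).
  by apply: exists_expr_lt rho01 _; rewrite !divr_gt0 ?mulr_gt0 //; lra.
have close x : abs x <= abs s -> abs (f x - psum c n x) <= e / 2.
  move=> xs; apply: le_trans (HK x rho n rho01 _) _; first by rewrite divfK ?gt_eqF.
  rewrite ler_pdivrMr // (le_trans (_ : _ <= (K + 1) * rho ^+ n)) //.
    by rewrite ler_wpM2r ?exprn_ge0 //; [case/andP: rho01 | lra].
  by rewrite mulrC -ler_pdivlMr ?ltW //; lra.
have Pt : abs (psum c n t) <= B + e / 2.
  rewrite /psum -horner_poly; apply: poly_max_modulus s0 ts _ => x xs.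
  have xs' : abs x <= abs s by rewrite xs.
  rewrite horner_poly; have := close x xs'; have := HB x xs.
  have := abs_le_addB Habs (psum c n x) (f x); rewrite (absC Habs); lra.
have := close t ts; have := abs_le_addB Habs (f t) (psum c n t); lra.
Qed.

Lemma analytic_le_at0 (f : k -> k) (r B : R) : analytic_on_D abs f ->
  nontrivial_absval abs -> 0 < r ->
  (forall x, 0 < abs x < r -> abs (f x) <= B) -> abs (f 0) <= B.
Proof.
move=> [c Hc] nt r0 HB; have [s /andP[s_gt0 s1]] := nt.
have [K [K0 HK]] := analytic_tail_le Habs Hc s1.
have psum1 x : psum c 1 x = c 0%N by rewrite /psum big_ord1 expr0 mulr1.
have f0 : f 0 = c 0%N.
  have := HK 0 0 1%N; rewrite (abs0 Habs) mul0r lexx ltr01 expr1 mulr0 mul0r psum1 => /(_ isT isT).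
  by move=> h; apply/eqP; rewrite -subr_eq0; apply/eqP/(abs_eq0 Habs)/eqP; rewrite eq_le h abs_ge0.
apply/ler_addgt0Pr => e e0.
set rho := Num.min (2^-1) (e / (2 * (K + 1))).
have rho0 : 0 < rho by rewrite lt_min invr_gt0 ltr0n divr_gt0 //; lra.
have rho_half : rho <= 2^-1 by rewrite ge_min lexx.
have rho_e : rho <= e / (2 * (K + 1)) by rewrite ge_min lexx orbT.
have [x /andP[x0 xb]] : exists x, 0 < abs x < Num.min r (rho * abs s).
  apply: exists_abs_between nt 0 _ (lexx 0) _ _; first by rewrite lt_min r0 mulr_gt0.
  by rewrite ge_min; apply/orP; right; nra.
move: xb; rewrite lt_min => /andP[xr xs].
have := HK x rho 1%N; rewrite psum1 expr1 -f0 => /(_ _ (ltW xs)).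
have rho01 : 0 <= rho < 1 by rewrite ltW //=; lra.
move=> /(_ rho01) fx; have := HB x (introT andP (conj x0 xr)).
have : K * rho / (1 - rho) <= e.
  rewrite ler_pdivrMr; last by lra.
  rewrite ler_pdivlMr in rho_e; last by lra.
  nra.
have := abs_le_addB Habs (f 0) (f x); rewrite (absC Habs); lra.
Qed.

End AbsoluteValueClosedField.

Lemma abs_horner_le_sup (R : realType) (k : fieldType) (abs : k -> R) (p : {poly k}) x :
  is_absval abs -> inD abs x -> abs p.[x] <= sup [set abs p.[t] | t in inD abs].
Proof.
move=> Habs Dx; apply: sup_upper_bound; last by exists x.
split; first by exists (abs p.[x]), x.
exists (\sum_(i < size p) abs p`_i) => _ [y Dy <-].
rewrite horner_coef; apply: le_trans (abs_sum Habs _ _ _) _; apply: ler_sum => i _.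
rewrite (absM Habs) (absX Habs) ler_piMr ?(abs_ge0 Habs) // exprn_ile1 ?(abs_ge0 Habs) //.
exact: ltW.
Qed.

Section Escape.
Variables (R : realType) (k : closedFieldType) (abs : k -> R).
Hypothesis Habs : is_absval abs.
Variables (d : nat) (alpha : 'I_d.+1 -> k -> k) (C : R).
Hypothesis hd : (2 <= d)%N.

Let P t z := \sum_(i < d.+1) alpha i t * z ^+ (d - i).

Hypothesis HC : forall t z : k, 0 < abs t -> abs t <= 2^-1 ->
  `| d%:R^-1 * ln (Num.max 1 (abs (P t z))) - ln (Num.max 1 (abs z)) | <= C * ln (abs t)^-1.

Variables (a : k -> k) (u : nat -> k -> k).
Hypothesis Hu_an : forall m, analytic_on_D abs (u m).
Hypothesis Hu : forall m t, inD abs t -> t != 0 -> u m t = iter m (P t) (a t).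

Variables (l N : nat) (Q : 'I_N -> {poly k}) (A : R).
Hypothesis hl : C * d%:R <= l%:R.
Hypothesis HQ : forall n : nat, exists i : 'I_N, exists h : k -> k, analytic_on_D abs h /\
  forall t, inD abs t -> t != 0 -> (u n t - (Q i).[t]) / t ^+ l = h t.
Hypothesis HQA : forall i x, inD abs x -> abs (Q i).[x] + 2 <= A.

Lemma abs_u_succ_le m y Bn : 0 < abs y -> abs y <= 2^-1 ->
  ln (Num.max 1 (abs (u m y))) <= Bn ->
  abs (u m.+1 y) <= expR (d%:R * Bn) * expR (d%:R * (C * ln (abs y)^-1)).
Proof.
move=> y0 y_half HBn; rewrite -expRD -mulrDr; apply: le_expR_of_ln_max1.
have Dy : inD abs y by rewrite /inD; lra.
have y_ne0 : y != 0 by apply/eqP => y_eq0; move: y0; rewrite y_eq0 (abs0 Habs) ltxx.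
have -> : u m.+1 y = P y (u m y) by rewrite !Hu // iterS.
have := le_trans (ler_norm _) (HC (u m y) y0 y_half).
have d0 : (0 : R) < d%:R by rewrite ltr0n; lia.
move=> h; have : d%:R^-1 * ln (Num.max 1 (abs (P y (u m y)))) <= Bn + C * ln (abs y)^-1.
  by lra.
by rewrite ler_pdivrMl.
Qed.

Lemma absX_mul_growth_le1 s : 0 < abs s -> abs s <= 1 ->
  abs s ^+ l * expR (d%:R * (C * ln (abs s)^-1)) <= 1.
Proof.
move=> s0 s1; have lns : ln (abs s) <= 0 by exact: ln_le0.
rewrite -[abs s ^+ l](lnK (_ : abs s ^+ l \is Num.pos)) ?posrE ?exprn_gt0 //.
rewrite -expRD -[X in _ <= X]expR0 ler_expR lnXn // lnV ?posrE // -mulr_natl.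
have : 0 <= (l%:R - C * d%:R) * - ln (abs s) by rewrite mulr_ge0 ?subr_ge0 ?oppr_ge0.
nra.
Qed.

Lemma A_ge2 : 2 <= A.
Proof.
have [i _] := HQ 0%N; have D0 : inD abs 0 by rewrite /inD (abs0 Habs).
by have := HQA i D0; have := abs_ge0 Habs (Q i).[0]; lra.
Qed.

Lemma abs_u_succ_le_punctured m s Bn : 0 < abs s -> abs s <= 2^-1 ->
  (forall y, abs y = abs s -> ln (Num.max 1 (abs (u m y))) <= Bn) ->
  forall x, x != 0 -> abs x <= abs s ^+ 2 -> abs (u m.+1 x) <= 3 * A * expR (d%:R * Bn).
Proof.
move=> s0 s_half HBn x x0 xs.
have [i [h [Hh Heq]]] := HQ m.+1.
have Ds : inD abs s by rewrite /inD; lra.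
have s_ne0 : s != 0 by apply/eqP => s_eq0; move: s0; rewrite s_eq0 (abs0 Habs) ltxx.
have A2 := A_ge2.
have Bn0 : 0 <= Bn by apply: le_trans (HBn s erefl); apply: ln_ge0; rewrite le_max lexx.
set E := expR (d%:R * Bn); set G := expR (d%:R * (C * ln (abs s)^-1)).
have E1 : 1 <= E by rewrite -[X in X <= _]expR0 ler_expR mulr_ge0 ?ler0n.
have G0 : 0 < G := expR_gt0 _.
have sl0 : 0 < abs s ^+ l := exprn_gt0 _ s0.
have sG : abs s ^+ l * G <= 1 by apply: absX_mul_growth_le1 => //; lra.
have xs' : abs x <= abs s by apply: le_trans xs _; rewrite expr2 ler_piMl ?(abs_ge0 Habs) //; lra.
have Dx : inD abs x by apply: le_lt_trans xs' Ds.
have h_circle y : abs y = abs s -> abs (h y) <= (E * G + A) / abs s ^+ l.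
  move=> ys; have Dy : inD abs y by rewrite /inD ys.
  have y_ne0 : y != 0 by apply/eqP => y_eq0; move: s0; rewrite -ys y_eq0 (abs0 Habs) ltxx.
  rewrite -Heq // (absM Habs) (absV Habs) (absX Habs) ys.
  apply: ler_wpM2r; first by rewrite invr_ge0 ltW.
  apply: le_trans (absB Habs _ _) _; apply: lerD; last by have := HQA i Dy; lra.
  by move: (@abs_u_succ_le m y Bn); rewrite ys; apply => //; apply: HBn.
have hx := analytic_max_modulus Habs Hh Ds s_ne0 xs' h_circle.
have -> : u m.+1 x = (Q i).[x] + x ^+ l * h x.
  by rewrite -Heq // mulrC divfK ?expf_neq0 // addrC subrK.
apply: le_trans (absD Habs _ _) _; rewrite (absM Habs) (absX Habs).
have xl : abs x ^+ l <= abs s ^+ l * abs s ^+ l.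
  by rewrite -exprD addnn -mul2n exprM; apply: lerXn2r; rewrite ?nnegrE ?exprn_ge0 ?(abs_ge0 Habs).
have : abs x ^+ l * abs (h x) <= E + A.
  apply: le_trans (ler_pM (exprn_ge0 _ (abs_ge0 Habs _)) (abs_ge0 Habs _) xl hx) _.
  have -> : abs s ^+ l * abs s ^+ l * ((E * G + A) / abs s ^+ l) =
      E * (abs s ^+ l * G) + A * abs s ^+ l by field; rewrite gt_eqF.
  have : abs s ^+ l <= 1 by rewrite exprn_ile1 ?(abs_ge0 Habs) //; lra.
  nra.
have := HQA i Dx; nra.
Qed.

Lemma ln_u_succ_le m r Bn : nontrivial_absval abs -> 0 < r -> r <= 2^-1 ->
  (forall y, abs y < r -> ln (Num.max 1 (abs (u m y))) <= Bn) ->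
  forall t, abs t < r ^+ 2 -> ln (Num.max 1 (abs (u m.+1 t))) <= ln (3 * A) + d%:R * Bn.
Proof.
move=> nt r0 r_half HBn t tr; have A2 := A_ge2.
have Bn0 : 0 <= Bn.
  by apply: le_trans (HBn 0 _); [apply: ln_ge0; rewrite le_max lexx | rewrite (abs0 Habs)].
have E1 : 1 <= expR (d%:R * Bn) by rewrite -[X in X <= _]expR0 ler_expR mulr_ge0 ?ler0n.
rewrite -[d%:R * Bn]expRK -lnM ?posrE ?expR_gt0 //; last by lra.
apply: ln_max1_le; first by nra.
have punctured x : 0 < abs x < r ^+ 2 -> abs (u m.+1 x) <= 3 * A * expR (d%:R * Bn).
  move=> /andP[x0 xr]; have sqrt_x0 := sqrtr_ge0 (abs x).
  have [s /andP[xs sr]] : exists s, Num.sqrt (abs x) < abs s < r.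
    apply: exists_abs_between Habs nt _ _ sqrt_x0 _ _; last by lra.
    by rewrite -(ger0_norm (ltW r0)) -sqrtr_sqr ltr_sqrt ?exprn_gt0.
  apply: (abs_u_succ_le_punctured (s := s)); first exact: le_lt_trans xs.
  - by lra.
  - by move=> y ys; apply: HBn; rewrite ys.
  - by apply/eqP => x_eq0; move: x0; rewrite x_eq0 (abs0 Habs) ltxx.
  - rewrite -(sqr_sqrtr (abs_ge0 Habs x)); apply: lerXn2r; rewrite ?nnegrE ?(abs_ge0 Habs) //.
    exact: ltW.
(* [Hu] and [HQ] say nothing at [t = 0]: the bound there comes from continuity. *)
have [->|t0] := eqVneq t 0.
  by apply: (analytic_le_at0 Habs (Hu_an m.+1) nt _ punctured); rewrite exprn_gt0.
by apply: punctured; rewrite tr abs_gt0.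
Qed.

Lemma ln_u_iter_le n0 r0 : 0 < r0 -> r0 <= 2^-1 ->
  (forall t, abs t < r0 -> ln (Num.max 1 (abs (u n0 t))) <= ln (3 * A)) ->
  forall j t, abs t < r0 ^+ (2 ^ j) ->
    ln (Num.max 1 (abs (u (n0 + j)%N t))) <= ln (3 * A) * (d%:R ^+ j.+1 - 1) / (d%:R - 1).
Proof.
move=> r0_gt0 r0_half base; have r0_lt1 : r0 < 1 by lra.
have d1 : (1 : R) < d%:R by rewrite ltr1n.
have ln3A : 0 <= ln (3 * A) by apply: ln_ge0; have := A_ge2; lra.
have [nt|triv] := pselect (nontrivial_absval abs); last first.
  move=> j t _; rewrite (elimT max_idPl (abs_le1_of_trivial Habs triv _)) ln1.
  rewrite divr_ge0 ?mulr_ge0 ?subr_ge0 ?exprn_ege1 //; lra.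
elim=> [|j IH] t; first by rewrite expn0 expr1 addn0 mulfK ?gt_eqF ?subr_gt0 //; exact: base.
rewrite expnSr exprM addnS => tr.
have rj0 : 0 < r0 ^+ (2 ^ j) by rewrite exprn_gt0.
have rj_half : r0 ^+ (2 ^ j) <= 2^-1.
  by apply: le_trans r0_half; rewrite -[X in _ <= X]expr1 ler_iXn2l ?expn_gt0.
apply: le_trans (ln_u_succ_le nt rj0 rj_half IH tr) _.
rewrite [X in _ <= X](_ : _ = ln (3 * A) + d%:R * (ln (3 * A) * (d%:R ^+ j.+1 - 1) / (d%:R - 1))) //.
by rewrite [in LHS]exprS; field; rewrite subr_eq0 gt_eqF.
Qed.

End Escape.

Theorem lemma4p1 (R : realType) (k : closedFieldType) (abs : k -> R)
  (Habs : is_absval abs) (Hcompl : kcomplete abs)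
  (d : nat) (hd : (2 <= d)%N)
  (alpha : 'I_d.+1 -> k -> k)
  (Halpha : forall i, merom_at0_on_D abs (alpha i))
  (Halpha0 : forall t, inD abs t -> t != 0 -> alpha ord0 t != 0)
  (C : R) (hC : 0 < C)
  (HC : forall t z : k, 0 < abs t -> abs t <= 2^-1 ->
     `| d%:R^-1 * ln (Num.max 1 (abs (\sum_(i < d.+1) alpha i t * z ^+ (d - i))))
        - ln (Num.max 1 (abs z)) | <= C * ln (abs t)^-1)
  (a : k -> k) (Ha : merom_at0_on_D abs a)
  (u : nat -> k -> k)
  (Hu_an : forall m, analytic_on_D abs (u m))
  (Hu : forall m t, inD abs t -> t != 0 ->
     u m t = iter m (fun z => \sum_(i < d.+1) alpha i t * z ^+ (d - i)) (a t))
  (l : nat) (hl : C * d%:R <= l%:R)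
  (N : nat) (Q : 'I_N -> {poly k})
  (HQ : forall n : nat, exists i : 'I_N, exists h : k -> k, analytic_on_D abs h /\
     forall t, inD abs t -> t != 0 -> (u n t - (Q i).[t]) / t ^+ l = h t)
  (n0 : nat) (hn0 : (1 <= n0)%N) (r0 : R) (hr0 : 0 < r0) (hr0' : r0 <= 2^-1) :
  let A := \big[Num.max/0]_(j < N) (sup [set abs (Q j).[t] | t in inD abs] + 2) in
  (forall t, abs t < r0 -> abs (u n0 t) <= ln A) ->
  let g := fun (m : nat) (t : k) => (d%:R ^+ m)^-1 * ln (Num.max 1 (abs (u m t))) in
  let C1 := d%:R / (d%:R - 1) * ln (3 * A) in
  forall j : nat, forall t, abs t < r0 ^+ (2 ^ j) ->
    g (n0 + j)%N t <= C1 / d%:R ^+ n0.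
Proof.
move=> A HA g C1 j t Ht.
have HQA i x : inD abs x -> abs (Q i).[x] + 2 <= A.
  move=> Dx; apply: le_trans (le_bigmax _ (fun j => sup _ + 2) i); rewrite lerD2r.
  exact: abs_horner_le_sup.
have A2 := A_ge2 Habs HQ HQA.
have base t' : abs t' < r0 -> ln (Num.max 1 (abs (u n0 t'))) <= ln (3 * A).
  move=> /HA uA; apply: ln_max1_le; first lra.
  by have := le_ln1Dx (_ : -1 < A - 1); rewrite subrKC; lra.
have scale_ge0 : 0 <= (d%:R ^+ (n0 + j))^-1 :> R by rewrite invr_ge0 exprn_ge0.
apply: le_trans (ler_wpM2l scale_ge0 (ln_u_iter_le Habs hd HC Hu_an Hu hl HQ HQA hr0 hr0' base Ht)) _.
apply: geometric_sum_div_le; first by rewrite ltr1n.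
apply: ln_ge0; lra.
Qed.
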